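(* Let $\Psi=(\psi_{ij})$ and $\Phi=(\phi_{ij})$ be orthogonal quantum Latin squares of order $6$, where $\Psi$ is classical: there are an orthonormal basis $e_1,\dots,e_6$ of $\mathbb C^6$ and a Latin square $L=(L_{ij})$ of order $6$ on $\{1,\dots,6\}$ with $\psi_{ij}\in\mathbb C e_{L_{ij}}$ for all $i,j$. Suppose $L$ has a subsquare of order three, i.e. there are $R,C\subseteq\{1,\dots,6\}$ with $|R|=|C|=3$ such that $\{L_{ij}: i\in R, j\in C\}$ has exactly $3$ elements. Then for each of the four blocks $A\times B$ with $A\in\{R,\{1,\dots,6\}\setminus R\}$ and $B\in\{C,\{1,\dots,6\}\setminus C\}$, the nine vectors $\phi_{ij}$, $(i,j)\in A\times B$, are pairwise distinct, in the sense that no two of them are scalar multiples of each other.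
   Context: A quantum Latin square (QLS) of order $n$ is an $n\times n$ matrix $\Psi=(\psi_{ij})_{1\le i,j\le n}$ whose entries are unit vectors in $\mathbb C^n$ such that the entries of each row and the entries of each column form an orthonormal basis of $\mathbb C^n$. Two QLS $\Psi=(\psi_{ij})$ and $\Phi=(\phi_{ij})$ of order $n$ are orthogonal if $\{\psi_{ij}\otimes\phi_{ij}: 1\le i,j\le n\}$ is an orthonormal basis of $\mathbb C^n\otimes\mathbb C^n$. *)

From HB Require Import structures.
From mathcomp Require Import all_boot all_order all_algebra.
From mathcomp Require Import reals.
From mathcomp Require Export complex.
Set Implicit Arguments. Unset Strict Implicit. Unset Printing Implicit Defensive.
Import Order.TTheory GRing.Theory Num.Theory.
Local Open Scope ring_scope.
Local Open Scope complex_scope.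

Definition cvec (R : realType) (I : finType) := I -> R[i].

Definition cdot (R : realType) (I : finType) (u v : cvec R I) : R[i] :=
  \sum_(k : I) u k * (v k)^*.

Definition is_onb (R : realType) (I J : finType) (f : J -> cvec R I) : Prop :=
  (forall j1 j2 : J, cdot (f j1) (f j2) = (if j1 == j2 then 1 else 0)) /\
  (forall v : cvec R I, exists c : J -> R[i],
      forall k : I, v k = \sum_(j : J) c j * f j k).

Definition is_QLS (R : realType) (n : nat)
    (Psi : 'I_n -> 'I_n -> cvec R 'I_n) : Prop :=
  (forall i, is_onb (fun j => Psi i j)) /\ (forall j, is_onb (fun i => Psi i j)).

Definition ctensor (R : realType) (I K : finType) (u : cvec R I) (v : cvec R K)
  : cvec R (I * K)%type := fun q => u q.1 * v q.2.

Definition orthogonal_QLS (R : realType) (n : nat)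
    (Psi Phi : 'I_n -> 'I_n -> cvec R 'I_n) : Prop :=
  is_onb (fun p : ('I_n * 'I_n)%type => ctensor (Psi p.1 p.2) (Phi p.1 p.2)).

Definition is_latin (n : nat) (L : 'I_n -> 'I_n -> 'I_n) : Prop :=
  (forall i, injective (L i)) /\ (forall j, injective (fun i => L i j)).

Definition classical_wrt (R : realType) (n : nat)
    (Psi : 'I_n -> 'I_n -> cvec R 'I_n) (e : 'I_n -> cvec R 'I_n)
    (L : 'I_n -> 'I_n -> 'I_n) : Prop :=
  forall i j, exists c : R[i], forall k, Psi i j k = c * e (L i j) k.

From HB Require Import structures.
From mathcomp Require Import all_boot all_order all_algebra.
From mathcomp Require Import reals complex.
Set Implicit Arguments. Unset Strict Implicit. Unset Printing Implicit Defensive.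
Import Order.TTheory GRing.Theory Num.Theory.
Local Open Scope ring_scope.

(* Fix v = Phi i1 j1 and give the cell (i, j) the weight |<v, Phi i j>|^2. Rows and columns
   of Phi are orthonormal bases, so every row and every column has total weight 1. Expanding
   e_s (x) v in the orthonormal basis Psi (x) Phi, where Psi i j is a unit multiple of
   e_(L i j), shows that the cells holding a fixed symbol s also have total weight 1. In a
   Latin square of order 2m with a subsquare of order m, a cell lies in the block A x B or in
   the opposite block exactly when its symbol lies in a certain set T of m symbols; counting
   rows of A, columns of B and symbols of T then gives the block total weight m/2. A vector of
   the block proportional to v has weight 1, as has v itself, so m/2 >= 2, i.e. m >= 4. *)

Section InnerProduct.
Variables (R : realType) (I : finType).
Implicit Types (u v w : cvec R I) (c : R[i]).

Lemma cdot_scalel c u v w : (forall k, u k = c * w k) -> cdot u v = c * cdot w v.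
Proof. by move=> uE; rewrite /cdot mulr_sumr; apply: eq_bigr => k _; rewrite uE mulrA. Qed.

Lemma cdot_scaler c u v w : (forall k, u k = c * w k) -> cdot v u = c^* * cdot v w.
Proof.
by move=> uE; rewrite /cdot mulr_sumr; apply: eq_bigr => k _; rewrite uE rmorphM mulrCA.
Qed.

Lemma unit_scale_norm c u w :
  (forall k, u k = c * w k) -> cdot u u = 1 -> cdot w w = 1 -> `|c| ^+ 2 = 1.
Proof.
by move=> uE uu ww; rewrite normCK -uu (cdot_scalel _ uE) (cdot_scaler _ uE) ww mulr1.
Qed.

Lemma onb_coefE (J : finType) (f : J -> cvec R I) v (c : J -> R[i]) :
  is_onb f -> (forall k, v k = \sum_j c j * f j k) -> forall j, cdot v (f j) = c j.
Proof.
case=> orth _ vE j; rewrite /cdot.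
under eq_bigr => k _ do rewrite vE mulr_suml.
rewrite exchange_big /=.
under eq_bigr => l _ do under eq_bigr => k _ do rewrite -mulrA.
under eq_bigr => l _ do rewrite -mulr_sumr -/(cdot _ _) orth.
rewrite (bigD1 j) //= eqxx mulr1 big1 ?addr0 // => l /negbTE ->.
by rewrite mulr0.
Qed.

Lemma parseval (J : finType) (f : J -> cvec R I) v :
  is_onb f -> \sum_j `|cdot v (f j)| ^+ 2 = cdot v v.
Proof.
move=> onb_f; have [c vE] := onb_f.2 v.
have coefE := onb_coefE onb_f vE.
under eq_bigr => j _ do rewrite normCK coefE.
have -> : cdot v v = \sum_k v k * (\sum_j c j * f j k)^* by apply: eq_bigr => k _; rewrite -vE.
under [RHS]eq_bigr => k _ do rewrite rmorph_sum mulr_sumr.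
rewrite exchange_big /=; apply: eq_bigr => j _.
rewrite -{1}(coefE j) mulrC /cdot mulr_sumr.
by apply: eq_bigr => k _; rewrite rmorphM mulrCA.
Qed.

End InnerProduct.

Lemma cdot_tensor (R : realType) (I K : finType) (a c : cvec R I) (b d : cvec R K) :
  cdot (ctensor a b) (ctensor c d) = cdot a c * cdot b d.
Proof.
rewrite /cdot /ctensor mulr_suml.
under [RHS]eq_bigr => i _ do rewrite mulr_sumr.
by rewrite pair_big; apply: eq_bigr => -[i k] _ /=; rewrite rmorphM mulrACA.
Qed.

Lemma inj_imset_subset_mem (aT rT : finType) (f : aT -> rT) (X : {set aT}) (Y : {set rT}) x :
  injective f -> #|X| = #|Y| -> f @: X \subset Y -> (f x \in Y) = (x \in X).
Proof.
move=> inj_f cardXY sub_fXY.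
have fXY : f @: X = Y by apply/eqP; rewrite eqEcard sub_fXY card_imset // cardXY leqnn.
by rewrite -fXY mem_imset.
Qed.

Section LatinSubsquare.
Variables (n m : nat) (L : 'I_n -> 'I_n -> 'I_n) (Rw Cl : {set 'I_n}).
Hypotheses (latL : is_latin L) (cardRw : #|Rw| = m) (cardCl : #|Cl| = m).
Hypotheses (cardS : #|[set L i j | i in Rw, j in Cl]| = m) (n_half : (m + m)%N = n).

Lemma card_setC_half (X : {set 'I_n}) : #|X| = m -> #|~: X| = m.
Proof. by move=> cardX; apply/eqP; rewrite -(eqn_add2l m) -{1}cardX cardsC card_ord n_half. Qed.

Lemma latin_subsquare_mem i j :
  (L i j \in [set L i j | i in Rw, j in Cl]) = ((i \in Rw) == (j \in Cl)).
Proof.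
set S := [set L i j | i in Rw, j in Cl]; have [inj_row inj_col] := latL.
have in_row i' j' : i' \in Rw -> (L i' j' \in S) = (j' \in Cl).
  move=> Rw_i'; apply: inj_imset_subset_mem; [exact: inj_row | by rewrite cardS |].
  by apply/subsetP => _ /imsetP [j'' Cl_j'' ->]; apply: imset2_f.
have in_col j' : j' \in Cl -> (L i j' \in S) = (i \in Rw).
  move=> Cl_j'; apply: (inj_imset_subset_mem (f := L^~ j')); [exact: inj_col | by rewrite cardS |].
  by apply/subsetP => _ /imsetP [i'' Rw_i'' ->]; apply: imset2_f.
have [Rw_i | notRw_i] := boolP (i \in Rw); first by rewrite in_row.
have <- : (L i j \in ~: S) = (j \in Cl).
  apply: inj_imset_subset_mem; [exact: inj_row | by rewrite cardCl card_setC_half |].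
  by apply/subsetP => _ /imsetP [j' Cl_j' ->]; rewrite in_setC in_col // (negbTE notRw_i).
by rewrite in_setC; case: (_ \in S).
Qed.

Lemma latin_subsquare_blocks (A B : {set 'I_n}) :
  (A = Rw \/ A = ~: Rw) -> (B = Cl \/ B = ~: Cl) ->
  exists2 T : {set 'I_n}, #|T| = m & forall i j, (L i j \in T) = ((i \in A) == (j \in B)).
Proof.
set S := [set L i j | i in Rw, j in Cl].
have cardSC := card_setC_half cardS.
by case=> ->; case=> ->; [exists S | exists (~: S) | exists (~: S) | exists S] => // i j;
  rewrite ?in_setC latin_subsquare_mem; case: (i \in Rw); case: (j \in Cl).
Qed.

End LatinSubsquare.

Section BlockDoubleCounting.
Variables (F : pzSemiRingType) (n : nat) (L : 'I_n -> 'I_n -> 'I_n) (M : 'I_n -> 'I_n -> F).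
Hypotheses (row_sum : forall i, \sum_j M i j = 1) (col_sum : forall j, \sum_i M i j = 1).
Hypothesis symbol_sum : forall s, \sum_i \sum_(j | L i j == s) M i j = 1.

Lemma sum_mem_mulrb (X : {set 'I_n}) (G : 'I_n -> F) :
  \sum_(i in X) G i = \sum_i G i *+ (i \in X).
Proof. by rewrite big_mkcond; apply: eq_bigr => i _; rewrite mulrb. Qed.

Lemma block_double_count (A B T : {set 'I_n}) :
  (forall i j, (L i j \in T) = ((i \in A) == (j \in B))) ->
  (\sum_(i in A) \sum_(j in B) M i j) *+ 2 + n%:R = (#|A| + #|B| + #|T|)%:R.
Proof.
move=> LT.
have rowsA : \sum_(i in A) \sum_j M i j = #|A|%:R.
  by under eq_bigr => i _ do rewrite row_sum; rewrite sumr_const.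
have colsB : \sum_i \sum_(j in B) M i j = #|B|%:R.
  by rewrite exchange_big; under eq_bigr => j _ do rewrite col_sum; rewrite sumr_const.
have symbolsT : \sum_(s in T) \sum_i \sum_(j | L i j == s) M i j = #|T|%:R.
  by under eq_bigr => s _ do rewrite symbol_sum; rewrite sumr_const.
have total : \sum_i \sum_j M i j = n%:R.
  by under eq_bigr => i _ do rewrite row_sum; rewrite sumr_const card_ord.
have symbolsE : \sum_(s in T) \sum_i \sum_(j | L i j == s) M i j
    = \sum_i \sum_j M i j *+ (L i j \in T).
  rewrite exchange_big; apply: eq_bigr => i _.
  under eq_bigr => s _ do rewrite big_mkcond.
  rewrite exchange_big; apply: eq_bigr => j _; rewrite -big_mkcondr mulrb.
  case: ifP => [T_Lij | /negbT notT_Lij].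
    rewrite (big_pred1 (L i j)) // => s /=.
    by rewrite [L i j == s]eq_sym; apply: andb_idl => /eqP ->.
  by rewrite big_pred0 // => s; apply/andP => -[T_s /eqP Ls]; rewrite Ls T_s in notT_Lij.
(* Rows of A, columns of B and symbols of T cover each cell 1 + 2 [(i, j) \in A x B] times. *)
rewrite !natrD -rowsA -colsB -symbolsT -total symbolsE.
rewrite !sum_mem_mulrb -sumrMnl -!big_split /=; apply: eq_bigr => i _.
rewrite sum_mem_mulrb -!sumrMnl -!big_split /=; apply: eq_bigr => j _.
rewrite LT; case: (i \in A); case: (j \in B);
  by rewrite /= ?mulr1n ?mulr0n ?mul0rn ?mulr2n ?add0r ?addr0.
Qed.

End BlockDoubleCounting.

Lemma le_block_sum2 (F : numDomainType) (n : nat) (M : 'I_n -> 'I_n -> F)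
    (A B : {set 'I_n}) (i1 j1 i2 j2 : 'I_n) :
  (forall i j, 0 <= M i j) -> i1 \in A -> j1 \in B -> i2 \in A -> j2 \in B ->
  (i1, j1) != (i2, j2) -> M i1 j1 + M i2 j2 <= \sum_(i in A) \sum_(j in B) M i j.
Proof.
move=> M_ge0 Ai1 Bj1 Ai2 Bj2 ne12.
rewrite pair_big_dep (bigD1 (i1, j1)) /= ?Ai1 ?Bj1 // (bigD1 (i2, j2)) /=; last first.
  by rewrite Ai2 Bj2 eq_sym.
by rewrite addrA lerDl sumr_ge0 // => p _; apply: M_ge0.
Qed.

Section ClassicalQLS.
Variables (R : realType) (n : nat) (Psi Phi : 'I_n -> 'I_n -> cvec R 'I_n).
Variables (e : 'I_n -> cvec R 'I_n) (L : 'I_n -> 'I_n -> 'I_n).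
Hypotheses (QLS_Psi : is_QLS Psi) (orth_PsiPhi : orthogonal_QLS Psi Phi).
Hypotheses (onb_e : is_onb e) (classical_Psi : classical_wrt Psi e L).

Lemma classical_cdot_basis s i j : `|cdot (e s) (Psi i j)| ^+ 2 = (L i j == s)%:R.
Proof.
have [d PsiE] := classical_Psi i j.
have unit_d : `|d| ^+ 2 = 1.
  apply: (unit_scale_norm PsiE); first by have := (QLS_Psi.1 i).1 j j; rewrite eqxx.
  by rewrite onb_e.1 eqxx.
rewrite (cdot_scaler _ PsiE) onb_e.1 normrM norm_conjC exprMn unit_d mul1r [s == _]eq_sym.
by case: (L i j == s); rewrite ?normr1 ?normr0 ?expr1n ?expr0n.
Qed.

Lemma classical_symbol_weight v s :
  \sum_i \sum_(j | L i j == s) `|cdot v (Phi i j)| ^+ 2 = cdot v v.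
Proof.
have := parseval (ctensor (e s) v) orth_PsiPhi.
rewrite cdot_tensor onb_e.1 eqxx mul1r => <-.
rewrite pair_big_dep big_mkcond; apply: eq_bigr => -[i j] _ /=.
by rewrite cdot_tensor normrM exprMn classical_cdot_basis mulr_natl mulrb.
Qed.

Hypothesis QLS_Phi : is_QLS Phi.

Lemma QLS_block_weight (m : nat) (Rw Cl A B : {set 'I_n}) v :
  is_latin L -> #|Rw| = m -> #|Cl| = m -> #|[set L i j | i in Rw, j in Cl]| = m ->
  (m + m)%N = n -> (A = Rw \/ A = ~: Rw) -> (B = Cl \/ B = ~: Cl) -> cdot v v = 1 ->
  (\sum_(i in A) \sum_(j in B) `|cdot v (Phi i j)| ^+ 2) *+ 2 = m%:R.
Proof.
move=> latL cardRw cardCl cardS n_half RwA ClB unit_v.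
have [T cardT LT] := latin_subsquare_blocks latL cardRw cardCl cardS n_half RwA ClB.
have cardA : #|A| = m by case: RwA => ->; last exact: card_setC_half.
have cardB : #|B| = m by case: ClB => ->; last exact: card_setC_half.
have rows i : \sum_j `|cdot v (Phi i j)| ^+ 2 = 1.
  by rewrite -unit_v; exact: parseval (QLS_Phi.1 i).
have cols j : \sum_i `|cdot v (Phi i j)| ^+ 2 = 1.
  by rewrite -unit_v; exact: parseval (QLS_Phi.2 j).
have symbols s : \sum_i \sum_(j | L i j == s) `|cdot v (Phi i j)| ^+ 2 = 1.
  by rewrite -unit_v; exact: classical_symbol_weight.
have := block_double_count rows cols symbols LT.
by rewrite cardA cardB cardT n_half addnC natrD => /addIr.
Qed.

End ClassicalQLS.

Theorem QLS_subsquare_block_not_proportional (R : realType) (n m : nat)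
    (Psi Phi : 'I_n -> 'I_n -> cvec R 'I_n)
    (e : 'I_n -> cvec R 'I_n) (L : 'I_n -> 'I_n -> 'I_n)
    (Rw Cl : {set 'I_n}) :
  is_QLS Psi -> is_QLS Phi -> orthogonal_QLS Psi Phi ->
  is_onb e -> is_latin L -> classical_wrt Psi e L ->
  #|Rw| = m -> #|Cl| = m -> #|[set L i j | i in Rw, j in Cl]| = m ->
  (m + m)%N = n -> (m < 4)%N ->
  forall A B : {set 'I_n}, (A = Rw \/ A = ~: Rw) -> (B = Cl \/ B = ~: Cl) ->
  forall i1 j1 i2 j2 : 'I_n,
    i1 \in A -> j1 \in B -> i2 \in A -> j2 \in B -> (i1, j1) <> (i2, j2) ->
    ~ (exists c : R[i], forall k, Phi i1 j1 k = c * Phi i2 j2 k).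
Proof.
move=> QLS_Psi QLS_Phi orth onb_e latL classical_Psi cardRw cardCl cardS n_half m_lt4
  A B RwA ClB i1 j1 i2 j2 Ai1 Bj1 Ai2 Bj2 ne12 [c Phi12].
pose v := Phi i1 j1; pose w i j := `|cdot v (Phi i j)| ^+ 2.
have unit_Phi i j : cdot (Phi i j) (Phi i j) = 1.
  by have := (QLS_Phi.1 i).1 j j; rewrite eqxx.
have w11 : w i1 j1 = 1 by rewrite /w unit_Phi normr1 expr1n.
have w22 : w i2 j2 = 1.
  by rewrite /w (cdot_scalel _ Phi12) unit_Phi mulr1 (unit_scale_norm Phi12).
have w_ge0 i j : 0 <= w i j by rewrite exprn_ge0.
have := le_block_sum2 w_ge0 Ai1 Bj1 Ai2 Bj2 (introN eqP ne12).
rewrite w11 w22 => two_le_block.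
have := lerD two_le_block two_le_block.
rewrite -[leRHS]mulr2n (QLS_block_weight QLS_Psi orth onb_e classical_Psi QLS_Phi latL
  cardRw cardCl cardS n_half RwA ClB (unit_Phi i1 j1)).
by rewrite -[1]mulr1n -!natrD ler_nat leqNgt m_lt4.
Qed.

Theorem mainTheorem12 (R : realType)
    (Psi Phi : 'I_6 -> 'I_6 -> cvec R 'I_6)
    (e : 'I_6 -> cvec R 'I_6) (L : 'I_6 -> 'I_6 -> 'I_6)
    (Rw Cl : {set 'I_6}) :
  is_QLS Psi -> is_QLS Phi -> orthogonal_QLS Psi Phi ->
  is_onb e -> is_latin L -> classical_wrt Psi e L ->
  #|Rw| = 3%N -> #|Cl| = 3%N ->
  #|[set L i j | i in Rw, j in Cl]| = 3%N ->
  forall A B : {set 'I_6}, (A = Rw \/ A = ~: Rw) -> (B = Cl \/ B = ~: Cl) ->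
  forall i1 j1 i2 j2 : 'I_6,
    i1 \in A -> j1 \in B -> i2 \in A -> j2 \in B -> (i1, j1) <> (i2, j2) ->
    ~ (exists c : R[i], forall k, Phi i1 j1 k = c * Phi i2 j2 k).
Proof.
move=> QLS_Psi QLS_Phi orth onb_e latL classical_Psi cardRw cardCl cardS.
exact (QLS_subsquare_block_not_proportional QLS_Psi QLS_Phi orth onb_e latL classical_Psi
  cardRw cardCl cardS erefl erefl).
Qed.
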